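(* Let $\Gamma_N\subset\mathbb{Z}^2$ be an $N\times N$ square domain, $N\ge 1$. If $N+1$ is prime, then the sandpile group $G_{\Gamma_N}$ has a cyclic subgroup isomorphic to $\mathbb{Z}/(N+1)\mathbb{Z}$, of order $N+1$.
   Context: An $N\times N$ square domain is a set $\{a,\dots,a+N-1\}\times\{b,\dots,b+N-1\}\subset\mathbb{Z}^2$. For finite $\Gamma\subset\mathbb{Z}^2$, the reduced Laplacian is $(\Delta_\Gamma f)(v)=\sum_{w\in\Gamma,\,w\sim v}f(w)-4f(v)$ (nearest-neighbor adjacency in $\mathbb{Z}^2$; all vertices outside $\Gamma$ are contracted to a sink), and the sandpile group is $G_\Gamma=\mathbb{Z}^\Gamma/\Delta_\Gamma(\mathbb{Z}^\Gamma)$. *)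

From mathcomp Require Import all_boot all_order all_algebra.
Set Implicit Arguments. Unset Strict Implicit. Unset Printing Implicit Defensive.
Import Order.TTheory GRing.Theory Num.Theory.
Local Open Scope ring_scope.

(* Vertices of the N x N square domain {a..a+N-1} x {b..b+N-1}, indexed by
   'I_N * 'I_N; the vertex (i,j) is the lattice point (a+i, b+j). *)
Definition sqdom (N : nat) := ('I_N * 'I_N)%type.

Definition point (a b : int) (N : nat) (v : sqdom N) : int * int :=
  (a + (v.1 : nat)%:Z, b + (v.2 : nat)%:Z).

Definition z2adj (p q : int * int) : bool :=
  (`|p.1 - q.1| + `|p.2 - q.2| == 1)%R.

(* reduced Laplacian of the square domain (outside vertices contracted to sink) *)
Definition laplacian (a b : int) (N : nat) (f : sqdom N -> int) (v : sqdom N) : int :=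
  \sum_(w : sqdom N | z2adj (point a b w) (point a b v)) f w - 4 * f v.

Definition in_lapl_image (a b : int) (N : nat) (g : sqdom N -> int) : Prop :=
  exists h : sqdom N -> int, forall v, g v = laplacian a b h v.

(* the class of x in G_Gamma = Z^Gamma / Delta(Z^Gamma) has order exactly n,
   i.e. it generates a cyclic subgroup isomorphic to Z/nZ *)
Definition sandpile_class_order (a b : int) (N : nat) (x : sqdom N -> int) (n : nat) : Prop :=
  (0 < n)%N /\ in_lapl_image a b (fun v => x v *+ n) /\
  forall k : nat, (0 < k < n)%N -> ~ in_lapl_image a b (fun v => x v *+ k).

(* The bilinear potential h(i,j) = (i+1)(j+1) is discrete harmonic at every
   interior vertex, and at the boundary the missing neighbours make its
   reduced Laplacian equal to (N+1) x for an integer load x supported on the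
   last row and column.  Hence (N+1) x = 0 in the sandpile group.  The reduced
   Laplacian is injective by the maximum principle, so if k x = Delta g then
   (N+1) g = k h; evaluating at the corner (0,0), where h = 1, shows that N+1
   divides k. *)
From mathcomp Require Import all_boot all_order all_algebra.
From mathcomp Require Import zify ring.
Import Order.TTheory GRing.Theory Num.Theory.
Set Implicit Arguments. Unset Strict Implicit. Unset Printing Implicit Defensive.
Local Open Scope ring_scope.

Lemma z2adj_shift (a b : int) (w1 w2 v1 v2 : nat) :
  z2adj (a + w1%:Z, b + w2%:Z) (a + v1%:Z, b + v2%:Z) =
  [|| (w1.+1 == v1) && (w2 == v2), (v1.+1 == w1) && (w2 == v2),
      (w1 == v1) && (w2.+1 == v2) | (w1 == v1) && (v2.+1 == w2)]%N.
Proof.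
by rewrite /z2adj /=; apply/idP/idP => [/eqP|] H; [lia | apply/eqP; lia].
Qed.

Lemma laplacianB (a b : int) (N : nat) (f g : sqdom N -> int) v :
  laplacian a b (fun w => f w - g w) v = laplacian a b f v - laplacian a b g v.
Proof. by rewrite /laplacian sumrB; ring. Qed.

Lemma laplacianZ (a b : int) (N : nat) (c : int) (f : sqdom N -> int) v :
  laplacian a b (fun w => c * f w) v = c * laplacian a b f v.
Proof. by rewrite /laplacian -mulr_sumr; ring. Qed.

Section SquareLaplacian.

Variables (a b : int) (n : nat).
Implicit Types (f g : sqdom n.+1 -> int) (v w : sqdom n.+1).

Definition cell f (i j : nat) : int := f (inord i, inord j).

Lemma sum_at_coord f (i j : nat) :
  \sum_(w : sqdom n.+1 | ((w.1 : nat) == i) && ((w.2 : nat) == j)) f w =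
  if (i < n.+1)%N && (j < n.+1)%N then cell f i j else 0.
Proof.
case: ifP => [/andP [hi hj] | out].
- rewrite (big_pred1 (inord i, inord j)) // => -[x y] /=.
  by rewrite xpair_eqE -!val_eqE /= !inordK.
- rewrite big_pred0 // => w; apply/negbTE/andP => -[/eqP hi /eqP hj].
  by move: out; rewrite -hi -hj !ltn_ord.
Qed.

Lemma sum_adj f v :
  \sum_(w : sqdom n.+1 | z2adj (point a b w) (point a b v)) f w =
    (if (0 < v.1)%N then cell f v.1.-1 v.2 else 0)
  + (if (v.1.+1 < n.+1)%N then cell f v.1.+1 v.2 else 0)
  + (if (0 < v.2)%N then cell f v.1 v.2.-1 else 0)
  + (if (v.2.+1 < n.+1)%N then cell f v.1 v.2.+1 else 0).
Proof.
rewrite /point; under eq_bigl => w do rewrite z2adj_shift.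
rewrite big_mkcond /=.
rewrite (eq_bigr (fun w : sqdom n.+1 =>
     (if ((w.1 : nat).+1 == v.1) && ((w.2 : nat) == v.2) then f w else 0)
   + (if ((v.1 : nat).+1 == w.1) && ((w.2 : nat) == v.2) then f w else 0)
   + (if ((w.1 : nat) == v.1) && ((w.2 : nat).+1 == v.2) then f w else 0)
   + (if ((w.1 : nat) == v.1) && ((v.2 : nat).+1 == w.2) then f w else 0)));
  last first.
  (* the four adjacency cases are mutually exclusive *)
  move=> w _.
  case c1: (((w.1 : nat).+1 == v.1) && ((w.2 : nat) == v.2));
  case c2: (((v.1 : nat).+1 == w.1) && ((w.2 : nat) == v.2));
  case c3: (((w.1 : nat) == v.1) && ((w.2 : nat).+1 == v.2));
  case c4: (((w.1 : nat) == v.1) && ((v.2 : nat).+1 == w.2)) => /=; lia.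
rewrite !big_split /= -!big_mkcond /=.
case: v => [[v1 hv1] [v2 hv2]] /=.
congr (_ + _ + _ + _).
- case: v1 hv1 => [|i] hi /=; first by rewrite big_pred0.
  have := sum_at_coord f i v2; rewrite hv2 (ltnW hi) /= => <-.
  by apply: eq_bigl => w; rewrite eqSS.
- have := sum_at_coord f v1.+1 v2; rewrite hv2 andbT => <-.
  by apply: eq_bigl => w; rewrite eq_sym.
- case: v2 hv2 => [|j] hj /=; first by rewrite big_pred0 // => w; rewrite andbF.
  have := sum_at_coord f v1 j; rewrite hv1 (ltnW hj) /= => <-.
  by apply: eq_bigl => w; rewrite eqSS.
- have := sum_at_coord f v1 v2.+1; rewrite hv1 /= => <-.
  by apply: eq_bigl => w; rewrite [(v2.+1 == _)]eq_sym.
Qed.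

Lemma subharmonic_le0 g :
  (forall v, 0 <= laplacian a b g v) -> forall v, g v <= 0.
Proof.
move=> sub_g; have [v0 _ max_v0] := @arg_maxP _ _ _ (ord0, ord0) predT g isT.
set M := g v0 in max_v0 *; have {}max_v0 v : g v <= M by exact: max_v0.
move=> v; rewrite leNgt; apply/negP => gv_gt0.
have {v gv_gt0} M_gt0 : 0 < M := lt_le_trans gv_gt0 (max_v0 v).
have bounded (c : bool) i j : (if c then cell g i j else 0) <= M.
  by case: c; [apply: max_v0 | apply: ltW].
have max_left w : g w = M -> (0 < w.1)%N /\ cell g w.1.-1 w.2 = M.
  move: (bounded (0 < w.1)%N w.1.-1 w.2) (bounded (w.1.+1 < n.+1)%N w.1.+1 w.2).
  move: (bounded (0 < w.2)%N w.1 w.2.-1) (bounded (w.2.+1 < n.+1)%N w.1 w.2.+1).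
  move: (sub_g w); rewrite /laplacian sum_adj; case: (0 < w.1)%N => /=; lia.
suff no_max : forall i w, (w.1 : nat) = i -> g w <> M by exact: (no_max _ v0).
elim=> [|i IH] w w1_eq /max_left[w1_gt0 left_eq].
  by rewrite w1_eq in w1_gt0.
apply: (IH (inord i, inord w.2)); last by rewrite -left_eq w1_eq.
by rewrite /= inordK // (ltn_trans _ (ltn_ord w.1)) // w1_eq.
Qed.

Lemma laplacian_inj f g :
  (forall v, laplacian a b f v = laplacian a b g v) -> f =1 g.
Proof.
have le_of_eq f1 f2 : (forall v, laplacian a b f1 v = laplacian a b f2 v) ->
    forall v, f1 v <= f2 v.
  move=> eq_lap v; rewrite -subr_le0.
  apply: (subharmonic_le0 (g := fun w => f1 w - f2 w)) => {}v.
  by rewrite laplacianB eq_lap subrr.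
by move=> eq_lap v; apply/le_anti; rewrite !le_of_eq.
Qed.

Definition bilin (w : sqdom n.+1) : int := ((w.1 : nat).+1 * (w.2 : nat).+1)%N%:Z.

Definition boundary_load (v : sqdom n.+1) : int :=
  - ((if (v.1 : nat) == n then (v.2 : nat).+1 else 0)
     + (if (v.2 : nat) == n then (v.1 : nat).+1 else 0))%N%:Z.

Lemma laplacian_bilin v : laplacian a b bilin v = boundary_load v *+ n.+2.
Proof.
rewrite /laplacian sum_adj /boundary_load /bilin /cell /=.
case: v => [[i lt_i] [j lt_j]] /=.
have west : (if (0 < i)%N then ((@inord n i.-1).+1 * (@inord n j).+1)%N%:Z else 0)
    = (i * j.+1)%N%:Z.
  have [->//|i_gt0] := posnP i.
  by rewrite !inordK ?prednK //; lia.
have south : (if (0 < j)%N then ((@inord n i).+1 * (@inord n j.-1).+1)%N%:Z else 0)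
    = (i.+1 * j)%N%:Z.
  have [->|j_gt0] := posnP j; first by rewrite muln0.
  by rewrite !inordK ?prednK //; lia.
have east : (if (i.+1 < n.+1)%N then ((@inord n i.+1).+1 * (@inord n j).+1)%N%:Z else 0)
    = if i == n then 0 else (i.+2 * j.+1)%N%:Z.
  case: eqP => [->|ne_i]; first by rewrite ltnn.
  have i_lt : (i.+1 < n.+1)%N by lia.
  by rewrite i_lt !inordK.
have north : (if (j.+1 < n.+1)%N then ((@inord n i).+1 * (@inord n j.+1).+1)%N%:Z else 0)
    = if j == n then 0 else (i.+1 * j.+2)%N%:Z.
  case: eqP => [->|ne_j]; first by rewrite ltnn.
  have j_lt : (j.+1 < n.+1)%N by lia.
  by rewrite j_lt !inordK.
by rewrite west south east north; case: eqP => [->|_]; case: eqP => [->|_] /=; lia.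
Qed.

Lemma boundary_load_order : sandpile_class_order a b boundary_load n.+2.
Proof.
split=> //; split; first by exists bilin => v; rewrite laplacian_bilin.
move=> k /andP[k_gt0 k_lt] [g load_k].
have g_eq : (fun w => (n.+2)%:Z * g w) =1 (fun w => k%:Z * bilin w).
  by apply: laplacian_inj => v; rewrite !laplacianZ -load_k laplacian_bilin; lia.
have := g_eq (ord0, ord0); rewrite /bilin /= mulr1 => corner.
have : (Posz n.+2 %| Posz k)%Z.
  by apply/dvdzP; exists (g (ord0, ord0)); rewrite -corner mulrC.
by rewrite dvdzE => /(dvdn_leq k_gt0); rewrite leqNgt k_lt.
Qed.

End SquareLaplacian.

Theorem lemma4 (N : nat) (a b : int) :
  (1 <= N)%N -> prime N.+1 ->
  exists x : sqdom N -> int, sandpile_class_order a b x N.+1.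
Proof.
case: N => [//|n] _ _.
by exists (@boundary_load n); exact: boundary_load_order.
Qed.
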